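(* Let $G_r=(V_r,E_r)$ (virtual network) and $G_s=(V_s,E_s)$ (substrate network) be simple, connected, undirected graphs, with integer demands $d_{\bar u}$ ($\bar u\in V_r$), $d_{\bar e}$ ($\bar e\in E_r$) and integer capacities $c_u$ ($u\in V_s$), $c_e$ ($e\in E_s$). Let $(x,y)$ be the incidence vector of a feasible mapping of $G_r$ on $G_s$. Then for every virtual edge $\bar e=(\bar u,\bar v)\in E_r$ and every leaf $l$ of $G_s$ (a node with exactly one neighbor, denoted $v_l$), the leaf equality $$y_{\bar e (l,v_l)} = x_{\bar u l}$$ holds.
   Context: A mapping $m=(m_V,m_E)$ of $G_r$ on $G_s$ consists of a node placement $m_V:V_r\to V_s$ which is one-to-one (distinct virtual nodes are placed on distinct substrate nodes), and an edge routing $m_E$ assigning to each virtual edge $\bar e=\{\bar u,\bar v\}\in E_r$ a loop-free path of $G_s$ whose endpoints are $m_V(\bar u)$ and $m_V(\bar v)$. The mapping is feasible if for each $u\in V_s$ the sum of $d_{\bar u}$ over virtual nodes $\bar u$ with $m_V(\bar u)=u$ is at most $c_u$, and for each $e\in E_s$ the sum of $d_{\bar e}$ over virtual edges $\bar e$ whose routing path contains $e$ is at most $c_e$. Each virtual edge is given a fixed arbitrary orientation, written $\bar e=(\bar u,\bar v)$. Let $E'_s=\bigcup_{\{u,v\}\in E_s}\{(u,v),(v,u)\}$ be the arc set of the bidirected substrate network. The incidence vector $(x,y)$ of a mapping $m$ has binary components $x_{\bar u u}$ ($\bar u\in V_r$, $u\in V_s$), equal to $1$ iff $m_V(\bar u)=u$,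 and $y_{\bar e a}$ ($\bar e\in E_r$, $a\in E'_s$), where for $\bar e=(\bar u,\bar v)$ and $a=(u,v)$, $y_{\bar e (u,v)}=1$ iff the path $m_E(\bar e)$, traversed from $m_V(\bar u)$ to $m_V(\bar v)$, uses the edge $\{u,v\}$ in the direction from $u$ to $v$. *)

From mathcomp Require Import all_boot all_order all_algebra.
Set Implicit Arguments. Unset Strict Implicit. Unset Printing Implicit Defensive.
Import Order.TTheory GRing.Theory Num.Theory.
Local Open Scope ring_scope.

Definition simple_graph (T : finType) (e : rel T) : Prop :=
  symmetric e /\ irreflexive e.

Definition connected_graph (T : finType) (e : rel T) : Prop :=
  forall x y : T, connect e x y.

Definition orientation (Vr : finType) (er : rel Vr) (Or : {set Vr * Vr}) : Prop :=
  (forall u v, (u, v) \in Or -> er u v) /\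
  (forall u v, er u v -> ((u, v) \in Or) (+) ((v, u) \in Or)).

Definition loop_free_path (T : finType) (e : rel T) (a b : T) (p : seq T) : Prop :=
  if p is x :: q then [/\ x = a, path e x q, last x q = b & uniq p] else False.

Definition is_mapping (Vr Vs : finType) (Or : {set Vr * Vr}) (es : rel Vs)
  (mV : Vr -> Vs) (mE : Vr * Vr -> seq Vs) : Prop :=
  injective mV /\
  forall ub vb, (ub, vb) \in Or -> loop_free_path es (mV ub) (mV vb) (mE (ub, vb)).

Definition uses_arc (T : finType) (p : seq T) (u v : T) : bool :=
  (u, v) \in zip p (behead p).

Definition uses_edge (T : finType) (p : seq T) (u v : T) : bool :=
  uses_arc p u v || uses_arc p v u.

Definition feasible (Vr Vs : finType) (Or : {set Vr * Vr}) (es : rel Vs)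
  (dV : Vr -> int) (dE : Vr * Vr -> int) (cV : Vs -> int) (cE : Vs -> Vs -> int)
  (mV : Vr -> Vs) (mE : Vr * Vr -> seq Vs) : Prop :=
  (forall u : Vs, \sum_(ub | mV ub == u) dV ub <= cV u) /\
  (forall u v : Vs, es u v -> \sum_(eb in Or | uses_edge (mE eb) u v) dE eb <= cE u v).

Definition inc_x (Vr Vs : finType) (mV : Vr -> Vs) (ub : Vr) (u : Vs) : nat :=
  mV ub == u.

Definition inc_y (Vr Vs : finType) (mE : Vr * Vr -> seq Vs) (eb : Vr * Vr) (u v : Vs) : nat :=
  uses_arc (mE eb) u v.

From mathcomp Require Import all_boot all_order all_algebra.

(** A leaf [l] has [vl] as its only neighbour, so a path can only enter [l]
    from [vl]; a loop-free path therefore traverses the arc [(l, vl)] exactly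
    when it starts at [l] and is not trivial.  The routing path of a virtual
    edge starts at the placement of its tail and is not trivial, since the
    placement is one-to-one and virtual edges join distinct nodes. *)

Lemma mem_zip_snd {S T : eqType} {s : seq S} {t : seq T} {a b} :
  (a, b) \in zip s t -> b \in t.
Proof.
elim: s t => [|x s IHs] [|y t] //=.
by rewrite !in_cons => /orP [/eqP [_ ->]|/IHs ->]; rewrite ?eqxx ?orbT.
Qed.

Section LeafArc.

Context {T : finType} {e : rel T} {l vl : T}.
Hypothesis e_sym : symmetric e.
Hypothesis leaf_l : forall w, e l w -> w = vl.

(* If the arc occurred later, the node before [l] would be a second copy of [vl]. *)
Lemma leaf_arc_head x q : path e x q -> uniq (x :: q) ->
  (l, vl) \in zip (x :: q) q -> x = l.
Proof.
elim: q x => [|y q IHq] x //= /andP [exy pq] /andP [xNyq uyq].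
rewrite in_cons => /orP [/eqP [-> _] // | arc_later].
have yl : y = l := IHq y pq uyq arc_later.
have xvl : x = vl by apply: leaf_l; rewrite e_sym -yl.
by move: xNyq; rewrite in_cons xvl (mem_zip_snd arc_later) orbT.
Qed.

Lemma uses_arc_leaf {a b p} : loop_free_path e a b p -> a != b ->
  uses_arc p l vl = (a == l).
Proof.
rewrite /uses_arc; case: p => [|x q] //= [-> pq last_q uq] aNb.
apply/idP/eqP => [|al]; first exact: leaf_arc_head.
case: q pq last_q uq => [_ /= ab|y q /= /andP [ay _] _ _].
  by rewrite ab eqxx in aNb.
have yvl : y = vl by apply: leaf_l; rewrite -al.
by rewrite in_cons al yvl eqxx.
Qed.

End LeafArc.

Theorem proposition3 (Vr Vs : finType) (er : rel Vr) (es : rel Vs)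
  (Or : {set Vr * Vr})
  (dV : Vr -> int) (dE : Vr * Vr -> int) (cV : Vs -> int) (cE : Vs -> Vs -> int)
  (mV : Vr -> Vs) (mE : Vr * Vr -> seq Vs) :
  simple_graph er -> simple_graph es ->
  connected_graph er -> connected_graph es ->
  orientation er Or ->
  (forall u v, cE u v = cE v u) ->
  is_mapping Or es mV mE ->
  feasible Or es dV dE cV cE mV mE ->
  forall ub vb : Vr, (ub, vb) \in Or ->
  forall l vl : Vs, es l vl -> (forall w, es l w -> w = vl) ->
  inc_y mE (ub, vb) l vl = inc_x mV ub l.
Proof.
move=> [_ er_irr] [es_sym _] _ _ [Or_er _] _ [mV_inj mE_path] _
  ub vb Or_ubvb l vl _ leaf_l.
have mV_neq : mV ub != mV vb.
  apply/eqP => /mV_inj ubvb.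
  by move: (Or_er _ _ Or_ubvb); rewrite ubvb er_irr.
by rewrite /inc_y /inc_x (uses_arc_leaf es_sym leaf_l (mE_path _ _ Or_ubvb) mV_neq).
Qed.
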